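(* Let $\xi_1,\dots,\xi_S$ be finitely many scenarios, $\varepsilon\in(0,1)$, and let $g(\cdot,\xi_i):\mathbb{R}^n\to\mathbb{R}$ be Lipschitz continuous for all $i=1,\dots,S$. Then the quantile function $q$ is Lipschitz continuous. Moreover, if for some $\hat x$ the index $i(\hat x)$ is unique and $g(\cdot,\xi_{i(\hat x)})$ is differentiable around $\hat x$, then $q$ is differentiable at $\hat x$.
   Context: The quantile function is $q(x):=\inf\{t\mid \frac1S\sum_{i=1}^S\chi(g(x,\xi_i)\le t)\ge 1-\varepsilon\}$, where $\chi$ is the $0$-$1$ indicator function (i.e. the $(1-\varepsilon)$-quantile of $g(x,\xi)$ when $\xi$ is uniformly distributed on $\{\xi_1,\dots,\xi_S\}$). For every $x$ there is an index $i(x)\in\{1,\dots,S\}$ with $q(x)=g(x,\xi_{i(x)})$; ''$i(\hat x)$ is unique'' means that exactly one index $i$ satisfies $g(\hat x,\xi_i)=q(\hat x)$. *)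

From mathcomp Require Import all_boot all_order all_algebra.
From mathcomp Require Import all_classical all_reals all_analysis.
Set Implicit Arguments. Unset Strict Implicit. Unset Printing Implicit Defensive.
Import Order.TTheory GRing.Theory Num.Theory.
Import numFieldNormedType.Exports.
Local Open Scope classical_set_scope.
Local Open Scope ring_scope.

(* Scenario functions: g i = g(., xi_(i+1)), i : 'I_S.
   Empirical (1-eps)-quantile:
   q(x) = inf { t | (1/S) * #{ i | g i x <= t } >= 1 - eps }. *)
Definition quantile (R : realType) (n S : nat) (eps : R)
  (g : 'I_S -> 'rV[R]_n -> R) (x : 'rV[R]_n) : R :=
  inf [set t : R | 1 - eps <= (#|[set i : 'I_S | g i x <= t]|%:R / S%:R)].

(* The empirical quantile of finitely many values f_1, ..., f_S is the least
   element of the set of levels t at which at least (1 - eps) S of the values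
   are <= t; this minimum is attained at one of the values, since every such t
   can be lowered to the largest value below it without changing the count.
   The quantile is monotone in the values and commutes with adding a constant
   to all of them, so it moves by at most max_i |f_i - h_i| when the values
   move from f to h: Lipschitz constants of the g i carry over to q.  If at
   xhat only g i0 attains q, the other values stay 2e away from q(xhat) for
   some e > 0; near xhat all values move by at most e, and since q(x) is one
   of them it can only be g i0 x, so q coincides with g i0 near xhat. *)

From mathcomp Require Import all_boot all_order all_algebra.
From mathcomp Require Import all_classical all_reals all_analysis.
From mathcomp Require Import lra.
Set Implicit Arguments. Unset Strict Implicit. Unset Printing Implicit Defensive.
Import Order.TTheory GRing.Theory Num.Theory.
Import numFieldNormedType.Exports.
Local Open Scope classical_set_scope.
Local Open Scope ring_scope.

Section EmpiricalQuantile.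
Variables (R : realType) (S : nat) (eps : R).
Implicit Types (f h : 'I_S -> R) (t d e : R).

Definition card_sublevel f t : nat := #|[set i | f i <= t]|.

Definition quantile_set f := [set t | 1 - eps <= (card_sublevel f t)%:R / S%:R].

Definition empirical_quantile f : R := inf (quantile_set f).

Lemma mem_sublevel f t i : (i \in [set j | f j <= t]) = (f i <= t).
Proof. by apply/idP/idP; rewrite inE. Qed.

Lemma card_sublevel_le f1 f2 t1 t2 :
  (forall i, f1 i <= t1 -> f2 i <= t2) ->
  (card_sublevel f1 t1 <= card_sublevel f2 t2)%N.
Proof.
move=> sub; apply/subset_leq_card/fintype.subsetP => i.
by rewrite !mem_sublevel; exact: sub.
Qed.

Lemma card_sublevel_snap f t : (0 < card_sublevel f t)%N ->
  exists2 i, f i <= t & card_sublevel f (f i) = card_sublevel f t.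
Proof.
case/card_gt0P => i0; rewrite mem_sublevel => fi0.
case: (@arg_maxP _ _ _ i0 (fun i => f i <= t) f fi0) => i fi i_max; exists i => //.
by apply/eqP; rewrite eqn_leq !card_sublevel_le // => j /le_trans; apply.
Qed.

Hypotheses (S_gt0 : (0 < S)%N) (eps_ge0 : 0 <= eps) (eps_lt1 : eps < 1).

Lemma quantile_set_card_gt0 f t : quantile_set f t -> (0 < card_sublevel f t)%N.
Proof.
rewrite /quantile_set /= lt0n; apply: contraPneq => ->.
by rewrite mul0r; apply/negP; rewrite -ltNge subr_gt0.
Qed.

Lemma quantile_set_max_value f : exists i, quantile_set f (f i).
Proof.
have i0 : 'I_S := Ordinal S_gt0.
case: (@arg_maxP _ _ _ i0 predT f isT) => i _ i_max; exists i; rewrite /quantile_set /=.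
have -> : card_sublevel f (f i) = S.
  by rewrite -[RHS]card_ord; apply: eq_card => j; rewrite mem_sublevel inE; exact: i_max.
by rewrite divff ?pnatr_eq0 -?lt0n // gerBl.
Qed.

Lemma quantile_set_min_value f :
  exists i, quantile_set f (f i) /\ forall t, quantile_set f t -> f i <= t.
Proof.
have [i0 qi0] := quantile_set_max_value f.
case: (@arg_minP _ _ _ i0 (fun i => `[< quantile_set f (f i) >]) f) => [|i].
  exact/asboolP.
move=> /asboolP qi i_min; exists i; split => // t qt.
have [j fj eq_card] := card_sublevel_snap (quantile_set_card_gt0 qt).
apply: le_trans (i_min j _) fj; apply/asboolP.
by rewrite /quantile_set /= eq_card.
Qed.

Lemma empirical_quantile_value f :
  exists i, empirical_quantile f = f i /\ quantile_set f (f i) /\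
            forall t, quantile_set f t -> f i <= t.
Proof.
have [i [qi i_min]] := quantile_set_min_value f; exists i; split => //.
apply/le_anti/andP; split; first by apply: ge_inf => //; exists (f i).
by apply: lb_le_inf => //; exists (f i).
Qed.

Local Notation q := empirical_quantile.

Lemma empirical_quantile_le_shift f1 f2 d :
  (forall i, f2 i <= f1 i + d) -> q f2 <= q f1 + d.
Proof.
move=> f21; have [i1 [-> [q1 _]]] := empirical_quantile_value f1.
have [i2 [-> [_ min2]]] := empirical_quantile_value f2.
apply: min2; apply: le_trans q1 _; apply: ler_wpM2r; first by rewrite invr_ge0.
by rewrite ler_nat; apply: card_sublevel_le => j; rewrite -(lerD2r d); apply: le_trans.
Qed.

Lemma empirical_quantile_dist f1 f2 d :
  (forall i, `|f1 i - f2 i| <= d) -> `|q f1 - q f2| <= d.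
Proof.
move=> f12.
have le21 : q f2 <= q f1 + d.
  by apply: empirical_quantile_le_shift => i; have := f12 i; rewrite ler_norml; lra.
have le12 : q f1 <= q f2 + d.
  by apply: empirical_quantile_le_shift => i; have := f12 i; rewrite ler_norml; lra.
by rewrite ler_norml; apply/andP; split; lra.
Qed.

Lemma empirical_quantile_isolated f h i0 e :
  q f = f i0 -> (forall j, j != i0 -> 2 * e < `|f j - q f|) ->
  (forall j, `|h j - f j| <= e) -> q h = h i0.
Proof.
move=> qf sep hf; have [j [qh _]] := empirical_quantile_value h.
have [<-|ji0] := eqVneq j i0; first exact: qh.
have : `|f j - q f| <= 2 * e.
  apply: le_trans (ler_distD (h j) _ _) _; rewrite mulr2n mulrDl !mul1r.
  by apply: lerD; [rewrite distrC | rewrite -qh; apply: empirical_quantile_dist].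
by rewrite leNgt sep.
Qed.

End EmpiricalQuantile.

Lemma near_eq_differentiable (R : numFieldType) (V W : normedModType R)
    (f g : V -> W) (x : V) :
  differentiable f x -> {near x, f =1 g} -> differentiable g x.
Proof.
move=> df fg; have fgx : f x = g x := nbhs_singleton fg.
have g_expand : g \o shift x = cst (g x) + 'd f x +o_ 0 id.
  apply/eqaddoP => e e_gt0.
  have fg0 : \forall h \near 0, f (h + x) = g (h + x).
    by move: fg; rewrite (near_shift 0) subr0.
  have /eqaddoP/(_ e e_gt0) := diff_locally df.
  by apply: filterS2 fg0 => h fgh; rewrite !fctE /= fgh fgx.
apply/diff_locallyP.
have -> : 'd g x = 'd f x :> (V -> W).
  exact: diff_unique (diff_continuous df) g_expand.
by split => //; exact: diff_continuous.
Qed.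

Theorem lemmaA1 (R : realType) (n S : nat) (eps : R)
  (g : 'I_S -> 'rV[R]_n -> R) :
  (0 < S)%N -> 0 < eps -> eps < 1 ->
  (forall i, [lipschitz g i x | x in setT]) ->
  [lipschitz quantile eps g x | x in setT] /\
  (forall xhat : 'rV[R]_n,
     (exists! i, g i xhat = quantile eps g xhat) ->
     (forall i, g i xhat = quantile eps g xhat ->
        \forall x \near xhat, differentiable (g i) x) ->
     differentiable (quantile eps g) xhat).
Proof.
move=> S_gt0 eps_gt0 eps_lt1 g_lip; have eps_ge0 := ltW eps_gt0.
have -> : quantile eps g = fun x => empirical_quantile eps (g^~ x) by [].
have g_unif : \forall k \near +oo, forall i, k.-lipschitz (g i).
  exact: filter_forall.
split.
  apply: filterS g_unif => k gk [x y] _.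
  by apply: empirical_quantile_dist => // i; exact: (gk i (x, y)).
move=> xhat [i0 [qi0 i0_uniq]] g_diff.
have [k k_gt0 gk] := pinfty_ex_gt0 g_unif.
have sep : \forall e \near 0^'+, forall j, j != i0 ->
    2 * e < `|g j xhat - empirical_quantile eps (g^~ xhat)|.
  apply: filter_forall => j; have [_|ji0] := eqVneq j i0; first exact: nearW.
  have gap : 0 < `|g j xhat - empirical_quantile eps (g^~ xhat)|.
    by rewrite normr_gt0 subr_eq0; apply: contra_neq ji0 => /i0_uniq ->.
  near=> e => _; rewrite -ltr_pdivlMl //; near: e; apply: nbhs_right_lt.
  by rewrite mulr_gt0 ?invr_gt0.
near (0 : R)^'+ => e.
have e_gt0 : 0 < e by near: e; exact: nbhs_right_gt.
apply: (near_eq_differentiable (nbhs_singleton (g_diff i0 qi0))).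
near=> x; apply/esym.
apply: (empirical_quantile_isolated (e := e) S_gt0 eps_ge0 eps_lt1 (esym qi0)).
  by near: e.
move=> j; apply: le_trans (gk j (x, xhat) _) _ => //.
rewrite -ler_pdivlMl // distrC; near: x; apply: cvgr_dist_le; first exact: cvg_id.
by rewrite mulr_gt0 ?invr_gt0.
Unshelve. all: by end_near. Qed.
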